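(* Let $\alpha,\beta,\gamma$ be real numbers with $\gamma>0$ and $(\alpha,\beta)\neq(0,0)$, and consider the discrete-time linear system $$A(t+1) = (1-\alpha\gamma)A(t) + \alpha\gamma B(t),\qquad B(t+1) = (1-\beta\gamma)B(t) + \beta\gamma A(t).$$ If $1-\alpha\gamma-\beta\gamma = 1$, then the system is unstable: there exist initial values $(A(0),B(0))\in\mathbb{R}^2$ for which the trajectory $(A(t),B(t))_{t\ge 0}$ is unbounded.
   Context: The transition matrix of the system is $M=\begin{bmatrix}1-\alpha\gamma & \alpha\gamma\\ \beta\gamma & 1-\beta\gamma\end{bmatrix}$; its eigenvalues are $1$ and $1-\alpha\gamma-\beta\gamma$, so in the case considered both eigenvalues equal $1$ (the system would be called marginally stable by the eigenvalue criterion), and the claim is that the trajectories nevertheless diverge. *)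

From Stdlib Require Import Reals.
Open Scope R_scope.

Fixpoint traj (alpha beta gamma A0 B0 : R) (t : nat) : R * R :=
  match t with
  | O => (A0, B0)
  | S t' =>
      let '(a, b) := traj alpha beta gamma A0 B0 t' in
      ((1 - alpha * gamma) * a + alpha * gamma * b,
       (1 - beta * gamma) * b + beta * gamma * a)
  end.

From Stdlib Require Import Reals Lra.
Open Scope R_scope.

(* When [1 - alpha gamma - beta gamma = 1] the transition matrix is a
   nontrivial Jordan block for the eigenvalue 1: the difference [A - B] is
   conserved, and every step shifts both coordinates by
   [- alpha gamma (A - B)].  Starting from [(1, 0)] the trajectory therefore
   drifts linearly, with nonzero slope [alpha gamma]. *)

Lemma traj_drift (alpha beta gamma A0 B0 : R) (t : nat) :
  beta * gamma = - (alpha * gamma) ->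
  traj alpha beta gamma A0 B0 t =
    (A0 - INR t * (alpha * gamma) * (A0 - B0),
     B0 - INR t * (alpha * gamma) * (A0 - B0)).
Proof.
  intros Hbeta; induction t as [|t IH].
  - simpl; f_equal; ring.
  - simpl traj; rewrite IH, S_INR, Hbeta; f_equal; ring.
Qed.

Lemma linear_seq_unbounded (c : R) :
  c <> 0 -> ~ (exists M : R, forall n : nat, Rabs (INR n * c) <= M).
Proof.
  intros Hc [M HM].
  destruct (INR_archimed (Rabs c) M (Rabs_pos_lt c Hc)) as [n Hn].
  specialize (HM n).
  rewrite Rabs_mult, (Rabs_right (INR n)) in HM by apply Rle_ge, pos_INR.
  lra.
Qed.

Lemma drift_rate_neq0 (alpha beta gamma : R) :
  gamma > 0 -> (alpha, beta) <> (0, 0) ->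
  beta * gamma = - (alpha * gamma) -> alpha * gamma <> 0.
Proof.
  intros Hgamma Hab Hbeta Hag; apply Hab.
  assert (alpha = 0) by (destruct (Rmult_integral _ _ Hag); lra).
  assert (beta = 0) by (destruct (Rmult_integral beta gamma); lra).
  subst; reflexivity.
Qed.

Theorem proposition3 (alpha beta gamma : R) :
  gamma > 0 ->
  (alpha, beta) <> (0, 0) ->
  1 - alpha * gamma - beta * gamma = 1 ->
  exists A0 B0 : R,
    ~ (exists M : R, forall t : nat,
          Rabs (fst (traj alpha beta gamma A0 B0 t)) <= M /\
          Rabs (snd (traj alpha beta gamma A0 B0 t)) <= M).
Proof.
  intros Hgamma Hab Heig.
  assert (Hbeta : beta * gamma = - (alpha * gamma)) by lra.
  exists 1, 0; intros [M HM].
  apply (linear_seq_unbounded (alpha * gamma));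
    [exact (drift_rate_neq0 alpha beta gamma Hgamma Hab Hbeta) |].
  exists M; intros n.
  destruct (HM n) as [_ HB].
  rewrite traj_drift in HB by exact Hbeta; simpl snd in HB.
  replace (0 - INR n * (alpha * gamma) * (1 - 0))
    with (- (INR n * (alpha * gamma))) in HB by ring.
  now rewrite Rabs_Ropp in HB.
Qed.
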